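(* Let $f\in\{0,1\}^n$ have a $2$-tilde-error overlap of shift $r$ with error positions $i<j$ and operations $O_i,O_j$. Let $\tilde\beta_r(f)=\mathrm{pre}_r(f)\,O_j(f)$. Then $\tilde\beta_r(f)$ is not $f$-free if and only if the $2$-tilde-error overlap satisfies Condition$^\sim$. Here Condition$^\sim$ means: the overlap is of type RR or SS, $r$ is even, $j-i=r/2$, and $f[i..(i+r/2-1)]=f[j..(j+r/2-1)]$.
   Context: Words are over $\{0,1\}$. For $w$ of length $n$: $w[k]$ is its $k$-th symbol, $w[a..b]$ is the factor from position $a$ to $b$, $\mathrm{pre}_l(w)=w[1..l]$ and $\mathrm{suf}_l(w)=w[n-l+1..n]$. A word is $f$-free if it does not contain $f$ as a factor. Operations: the replacement $R_i$ flips the symbol at position $i$. The swap $S_i$ is defined when $w[i]\ne w[i+1]$ and exchanges these two symbols. $\mathrm{dist}_\sim(u,v)$ is the minimum number of replacements and swaps transforming $u$ into the equal-length word $v$. A tilde-transformation is minimal if it uses exactly $\mathrm{dist}_\sim$ operations and modifies each position at most once. $f$ has a $2$-tilde-error overlap of length $l=n-r$ (with $1\le l\le n-1$; $r$ is the shift) if $\mathrm{dist}_\sim(\mathrm{pre}_l(f),\mathrm{suf}_l(f))=2$. In that case fix a minimal tilde-transformation from $\mathrm{pre}_l(f)$ to $\mathrm{suf}_l(f)$. It consists of two operations $O_i\in\{R_i,S_i\}$ and $O_j\in\{R_j,S_j\}$ at positions $i<j$ (the error positions). The words $O_i(f)$ and $O_j(f)$ are obtained by applying these operations to $f$ at the same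 positions. The type is RR, SR, RS or SS according to whether $(O_i,O_j)$ is (replacement, replacement), (swap, replacement), (replacement, swap) or (swap, swap). *)

(* Binary words are [seq bool]; positions are 1-indexed as in the paper. *)
From mathcomp Require Import all_boot.
Set Implicit Arguments. Unset Strict Implicit. Unset Printing Implicit Defensive.

Definition sym (w : seq bool) (k : nat) : bool := nth false w k.-1.

(* factor w[a..b] (1-indexed, inclusive) *)
Definition factor (w : seq bool) (a b : nat) : seq bool := take (b.+1 - a) (drop a.-1 w).

Definition pre (l : nat) (w : seq bool) : seq bool := take l w.
Definition suf (l : nat) (w : seq bool) : seq bool := drop (size w - l) w.

Definition free (f w : seq bool) : bool := ~~ infix f w.

Inductive op := Rep of nat | Swp of nat.

Definition op_index (o : op) : nat := match o with Rep i => i | Swp i => i end.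
Definition is_rep (o : op) : bool := if o is Rep _ then true else false.
Definition is_swp (o : op) : bool := if o is Swp _ then true else false.

Definition op_pos (o : op) : seq nat :=
  match o with Rep i => [:: i] | Swp i => [:: i; i.+1] end.

Definition op_valid (o : op) (w : seq bool) : bool :=
  match o with
  | Rep i => (0 < i) && (i <= size w)
  | Swp i => [&& 0 < i, i < size w & sym w i != sym w i.+1]
  end.

(* effect of an operation (meaningful when valid) *)
Definition apply_op (o : op) (w : seq bool) : seq bool :=
  match o with
  | Rep i => set_nth false w i.-1 (~~ sym w i)
  | Swp i => set_nth false (set_nth false w i.-1 (sym w i.+1)) i (sym w i)
  end.

Fixpoint run (w : seq bool) (os : seq op) : option (seq bool) :=
  match os with
  | [::] => Some w
  | o :: os' => if op_valid o w then run (apply_op o w) os' else None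
  end.

Definition reach (u v : seq bool) (k : nat) : Prop :=
  exists os : seq op, size os = k /\ run u os = Some v.

Definition tilde_dist (u v : seq bool) (d : nat) : Prop :=
  reach u v d /\ forall k, k < d -> ~ reach u v k.

(* minimal tilde-transformation: uses exactly dist_~ operations and modifies
   each position at most once *)
Definition minimal_tt (u v : seq bool) (os : seq op) : Prop :=
  [/\ run u os = Some v, tilde_dist u v (size os) & uniq (flatten (map op_pos os))].

Definition condition_tilde (f : seq bool) (r : nat) (Oi Oj : op) : Prop :=
  let i := op_index Oi in let j := op_index Oj in
  [/\ (is_rep Oi && is_rep Oj) || (is_swp Oi && is_swp Oj),
      ~~ odd r,
      j - i = r./2 &
      factor f i (i + r./2 - 1) = factor f j (j + r./2 - 1)].

From mathcomp Require Import all_boot zify.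
Set Implicit Arguments. Unset Strict Implicit. Unset Printing Implicit Defensive.

(* Read the overlap pointwise: f[q + r] = O_j(O_i(f))[q] for 1 <= q <= n - r, so f agrees with
   its r-shift except at the error positions, where the shift sees the operations.
   If f occurs in beta = pre_r(f) O_j(f) at offset k, comparing the two copies shows that f is
   k-periodic except at the positions of O_i translated by r - k, and (r - k)-periodic away
   from the positions of O_j.  Every error position must be explained
   by one of these two defects; a case analysis on the types of O_i and O_j shows that this
   forces O_j to be O_i translated by k = r - k, and k-periodicity then yields the equality
   of the two blocks.
   Conversely, if O_j is O_i translated by h = r/2 and the blocks of length h at i and j
   agree, an induction on q gives f[q + h] = O_j(f)[q] for every q, which places f at
   offset h in beta. *)

Lemma sym_set_nth (w : seq bool) k b p : 0 < p ->
  sym (set_nth false w k b) p = if p == k.+1 then b else sym w p.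
Proof. by case: p => // p _; rewrite /sym nth_set_nth. Qed.

Lemma sym_take l (w : seq bool) q : 0 < q <= l -> sym (take l w) q = sym w q.
Proof. by case: q => // q lql; rewrite /sym nth_take. Qed.

Lemma sym_drop r (w : seq bool) q : 0 < q -> sym (drop r w) q = sym w (q + r).
Proof. by case: q => // q _; rewrite /sym nth_drop addSn addnC. Qed.

Lemma sym_cat (s t : seq bool) y : 0 < y ->
  sym (s ++ t) y = if y <= size s then sym s y else sym t (y - size s).
Proof.
case: y => // y _; rewrite /sym nth_cat /=.
by case: ltnP => lt_y //; rewrite subSn.
Qed.

Lemma eq_from_sym (u v : seq bool) : size u = size v ->
  (forall p, 0 < p <= size u -> sym u p = sym v p) -> u = v.
Proof.
move=> eq_size eq_sym; apply: (@eq_from_nth _ false) => // t lt_t.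
by have := eq_sym t.+1; rewrite /sym /=; apply; rewrite lt_t.
Qed.

Lemma infix_symP (f w : seq bool) :
  infix f w <-> exists2 k, k + size f <= size w &
    forall y, 0 < y <= size f -> sym w (y + k) = sym f y.
Proof.
split.
  case/infixP=> s [s' ->]; exists (size s); first by rewrite !size_cat addnA leq_addr.
  move=> y /andP[y_gt0 y_le]; rewrite sym_cat; last lia.
  have -> : (y + size s <= size s) = false by lia.
  by rewrite addnK sym_cat // y_le.
move=> [k le_size occ]; apply/infixP.
exists (take k w), (drop (size f) (drop k w)).
rewrite -{1}(cat_take_drop k w) -{1}(cat_take_drop (size f) (drop k w)).
congr (_ ++ (_ ++ _)).
have size_f : size (take (size f) (drop k w)) = size f by rewrite size_takel // size_drop; lia.
apply: eq_from_sym => // y; rewrite size_f => y_range.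
by rewrite sym_take // sym_drop ?occ //; lia.
Qed.

Lemma factor_take_drop (w : seq bool) a h : 0 < a ->
  factor w a (a + h - 1) = take h (drop a.-1 w).
Proof. by move=> a_gt0; rewrite /factor; congr take; lia. Qed.

Lemma factor_eqP (w : seq bool) a b h : 0 < a -> 0 < b ->
  a + h <= (size w).+1 -> b + h <= (size w).+1 ->
  factor w a (a + h - 1) = factor w b (b + h - 1) <->
  forall t, t < h -> sym w (a + t) = sym w (b + t).
Proof.
move=> a_gt0 b_gt0 a_le b_le; rewrite !factor_take_drop //.
have sym_factor c t : 0 < c -> t < h -> c + h <= (size w).+1 ->
    nth false (take h (drop c.-1 w)) t = sym w (c + t).
  by move=> c_gt0 lt_t _; rewrite nth_take // nth_drop /sym; congr nth; lia.
split=> [eq_ab t lt_t | eq_sym].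
  by rewrite -!sym_factor // eq_ab.
have size_factor c : c + h <= (size w).+1 -> size (take h (drop c.-1 w)) = h.
  by move=> c_le; rewrite size_takel // size_drop; lia.
apply: (@eq_from_nth _ false) => [|t]; first by rewrite !size_factor.
by rewrite size_factor // => lt_t; rewrite !sym_factor // eq_sym.
Qed.

Lemma op_index_in_pos o : op_index o \in op_pos o.
Proof. by case: o => a; rewrite /= inE eqxx. Qed.

Lemma op_index_le_pos o p : p \in op_pos o -> op_index o <= p.
Proof. by case: o => a /=; rewrite !inE; lia. Qed.

Lemma op_valid_index_gt0 o w : op_valid o w -> 0 < op_index o.
Proof. by case: o => a /= /andP[]. Qed.

Lemma op_valid_pos o w p : op_valid o w -> p \in op_pos o -> 0 < p <= size w.
Proof.
case: o => a /=; rewrite !inE.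
  by case/andP=> ? ? /eqP->; lia.
by case/and3P=> ? ? _ /orP[]/eqP->; lia.
Qed.

Lemma op_valid_swp o w : is_swp o -> op_valid o w ->
  sym w (op_index o) != sym w (op_index o).+1.
Proof. by case: o => a //= _ /and3P[]. Qed.

Lemma op_valid_take o l w : op_valid o (take l w) -> op_valid o w.
Proof.
have size_le := size_take_min l w.
case: o => a /=; first by case/andP=> -> /leq_trans->//; lia.
case/and3P=> a_gt0 lt_a; rewrite !sym_take; [|lia|lia].
by move=> ->; rewrite a_gt0 andbT; lia.
Qed.

Lemma sym_apply_notin o w p : 0 < op_index o -> 0 < p -> p \notin op_pos o ->
  sym (apply_op o w) p = sym w p.
Proof.
case: o => a /= a_gt0 p_gt0; rewrite !inE.
  by rewrite sym_set_nth // prednK // => /negbTE->.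
by case/norP=> /negbTE p_a /negbTE p_Sa; rewrite !sym_set_nth // prednK // p_a p_Sa.
Qed.

Lemma sym_apply_Rep a w : 0 < a -> sym (apply_op (Rep a) w) a = ~~ sym w a.
Proof. by move=> a_gt0; rewrite /= sym_set_nth // prednK // eqxx. Qed.

Lemma sym_apply_Swp_l a w : 0 < a -> sym (apply_op (Swp a) w) a = sym w a.+1.
Proof.
move=> a_gt0; rewrite /= !sym_set_nth // prednK // eqxx.
by have -> : (a == a.+1) = false by lia.
Qed.

Lemma sym_apply_Swp_r a w : sym (apply_op (Swp a) w) a.+1 = sym w a.
Proof. by rewrite /= sym_set_nth // eqxx. Qed.

Lemma sym_apply_congr o w w' p : 0 < op_index o -> 0 < p ->
  {in p :: op_pos o, sym w =1 sym w'} -> sym (apply_op o w) p = sym (apply_op o w') p.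
Proof.
case: o => a /= a_gt0 p_gt0 eq_w; rewrite !sym_set_nth // prednK //.
  by case: eqP => _; rewrite eq_w // !inE eqxx ?orbT.
by case: eqP => _; [|case: eqP => _]; rewrite eq_w // !inE eqxx ?orbT.
Qed.

Lemma size_apply_op o w : {in op_pos o, forall p, 0 < p <= size w} ->
  size (apply_op o w) = size w.
Proof.
case: o => a /= pos_le; rewrite ?size_set_nth.
  by have := pos_le a; rewrite inE eqxx => /(_ isT); lia.
by have := pos_le a.+1; rewrite !inE eqxx orbT => /(_ isT); lia.
Qed.

Lemma apply_op_changes o w p : op_valid o w -> p \in op_pos o ->
  sym (apply_op o w) p != sym w p.
Proof.
case: o => a /=; rewrite !inE.
  by case/andP=> a_gt0 _ /eqP->; rewrite sym_apply_Rep //; case: sym.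
case/and3P=> a_gt0 _ neq_a /orP[]/eqP->.
  by rewrite sym_apply_Swp_l // eq_sym.
by rewrite sym_apply_Swp_r.
Qed.

Lemma apply_op_take o l w : op_valid o (take l w) ->
  apply_op o (take l w) = take l (apply_op o w).
Proof.
move=> valid_o; have o_gt0 := op_valid_index_gt0 valid_o.
have pos_le p : p \in op_pos o -> 0 < p <= minn l (size w).
  by rewrite -size_take_min; exact: op_valid_pos.
have size_o : size (apply_op o w) = size w.
  by apply: size_apply_op => p /pos_le; lia.
have size_o_take : size (apply_op o (take l w)) = minn l (size w).
  by rewrite size_apply_op size_take_min // => p /pos_le; rewrite size_take_min.
apply: eq_from_sym => [|p]; first by rewrite size_o_take size_take_min size_o.
rewrite size_o_take => p_le; rewrite sym_take; last lia.
apply: sym_apply_congr => [||q]; rewrite ?inE; [lia|lia|].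
by case/predU1P=> [->|/pos_le] => [|q_le]; rewrite sym_take //; lia.
Qed.

Lemma op_pos_lt Oi Oj : uniq (op_pos Oi ++ op_pos Oj) -> op_index Oi < op_index Oj ->
  {in op_pos Oi & op_pos Oj, forall p q, p < q}.
Proof. by case: Oi Oj => a [] b /= uniq_ab ? p q; rewrite !inE /= in uniq_ab *; lia. Qed.

Definition shift_op (h : nat) (o : op) : op :=
  match o with Rep a => Rep (a + h) | Swp a => Swp (a + h) end.

Lemma shift_opP h o o' : o' = shift_op h o <->
  (is_rep o && is_rep o' || is_swp o && is_swp o') /\ op_index o' = op_index o + h.
Proof.
by case: o o' => a [] b; split=> [eq_o|[]]; try injection eq_o as ->; move=> //= _ ->.
Qed.

Lemma op_index_shift h o : op_index (shift_op h o) = op_index o + h.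
Proof. by case: o. Qed.

Lemma mem_op_pos_shift h o p : (p + h \in op_pos (shift_op h o)) = (p \in op_pos o).
Proof. by case: o => a; rewrite /= !inE ?eqn_add2r // -addSn !eqn_add2r. Qed.

Lemma sym_apply_shift_op h o w p : 0 < op_index o -> p \in op_pos o ->
  {in op_pos o, forall q, sym w (q + h) = sym w q} ->
  sym (apply_op (shift_op h o) w) (p + h) = sym (apply_op o w) p.
Proof.
case: o => a a_gt0; rewrite [op_pos _]/= !inE.
  by move=> /eqP-> per; rewrite !sym_apply_Rep ?addn_gt0 ?a_gt0 // per ?inE.
move=> /orP[]/eqP-> per.
  by rewrite !sym_apply_Swp_l ?addn_gt0 ?a_gt0 // -addSn per // !inE eqxx orbT.
by rewrite addSn !sym_apply_Swp_r per // inE eqxx.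
Qed.

(* The arithmetic core of the forward direction, with k the offset of an occurrence of f in
   beta and d = r - k: an error position q either lies d after a position of O_i (a defect of
   k-periodicity) or k before a position of O_j (a defect of d-periodicity). *)
Lemma shift_op_of_cover Oi Oj k d : 0 < k + d ->
  {in op_pos Oi & op_pos Oj, forall p q, p < q} ->
  {in op_pos Oi ++ op_pos Oj, forall q,
    (q \in [seq p + d | p <- op_pos Oi]) || (q + k \in op_pos Oj)} ->
  (is_swp Oi -> d != 1) ->
  (is_swp Oj -> k = 1 -> op_index Oj \in [seq p + d | p <- op_pos Oi]) ->
  Oj = shift_op k Oi /\ d = k.
Proof.
move=> kd_gt0 /allrelP lt_ij /allP cover.
case: Oi Oj lt_ij cover => a [] b /= lt_ij cover swap_i swap_j;
  rewrite /allrel /= !inE /= in lt_ij cover swap_i swap_j.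
- by suff [-> ->] : b = a + k /\ d = k by []; lia.
- by exfalso; have := swap_j isT; lia.
- by exfalso; have := swap_i isT; lia.
- by suff [-> ->] : b = a + k /\ d = k by []; lia.
Qed.

Section TwoErrorOverlap.

(* The overlap hypotheses, with the transformation of pre_l(f) into suf_l(f) carried out
   on f itself (see [overlap_of_run]). *)
Variables (f : seq bool) (r : nat) (Oi Oj : op).
Hypothesis r_gt0 : 0 < r.
Hypothesis valid_i : op_valid Oi f.
Hypothesis valid_j : op_valid Oj (apply_op Oi f).
Hypothesis pos_j_le : {in op_pos Oj, forall q, q <= size f - r}.
Hypothesis pos_lt : {in op_pos Oi & op_pos Oj, forall p q, p < q}.
Hypothesis overlap : take (size f - r) (apply_op Oj (apply_op Oi f)) = drop r f.

Local Notation n := (size f).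
Local Notation i := (op_index Oi).
Local Notation j := (op_index Oj).
Local Notation g := (apply_op Oj f).
Local Notation beta := (take r f ++ g).

Let i_gt0 : 0 < i. Proof. exact: op_valid_index_gt0 valid_i. Qed.
Let j_gt0 : 0 < j. Proof. exact: op_valid_index_gt0 valid_j. Qed.

Let pos_i_lt p : p \in op_pos Oi -> i <= p < j.
Proof. by move=> p_i; rewrite op_index_le_pos // pos_lt // op_index_in_pos. Qed.

Let pos_j_range q : q \in op_pos Oj -> j <= q <= n - r.
Proof. by move=> q_j; rewrite op_index_le_pos // pos_j_le. Qed.

Let r_lt_n : r < n.
Proof. by have := pos_j_range (op_index_in_pos Oj); lia. Qed.

Let pos_range q : q \in op_pos Oi ++ op_pos Oj -> 0 < q <= n - r.
Proof.
have := pos_j_range (op_index_in_pos Oj).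
by rewrite mem_cat => ? /orP[/pos_i_lt | /pos_j_range]; lia.
Qed.

Lemma sym_shift q : 0 < q <= n - r -> sym f (q + r) = sym (apply_op Oj (apply_op Oi f)) q.
Proof. by move=> q_range; rewrite -sym_drop ?(proj1 (andP q_range)) // -overlap sym_take. Qed.

Lemma sym_shift_notin_i q : 0 < q <= n - r -> q \notin op_pos Oi -> sym f (q + r) = sym g q.
Proof.
move=> q_range q_i; rewrite sym_shift //; apply: sym_apply_congr => // [|p]; first lia.
rewrite inE => /predU1P[->|p_j]; rewrite sym_apply_notin //; first lia.
  by have := pos_j_range p_j; lia.
by apply/negP=> /pos_i_lt; have := pos_j_range p_j; lia.
Qed.

Lemma sym_shift_in_i p : p \in op_pos Oi -> sym f (p + r) = sym (apply_op Oi f) p.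
Proof.
move=> p_i; have := pos_i_lt p_i; have := pos_j_range (op_index_in_pos Oj) => ? ?.
have p_j : p \notin op_pos Oj by apply/negP=> /pos_j_range; lia.
by rewrite sym_shift ?(sym_apply_notin _ j_gt0) //; lia.
Qed.

Lemma sym_shift_mismatch q : q \in op_pos Oi ++ op_pos Oj -> sym f (q + r) != sym f q.
Proof.
rewrite mem_cat => /orP[q_i | q_j].
  by rewrite sym_shift_in_i // apply_op_changes.
have q_range := pos_j_range q_j.
have q_i : q \notin op_pos Oi by apply/negP=> /pos_i_lt; lia.
rewrite sym_shift; last lia.
by rewrite -[sym f q](sym_apply_notin _ i_gt0) // ?apply_op_changes //; lia.
Qed.

Lemma sym_beta y : 0 < y ->
  sym beta y = if y <= r then sym f y else sym g (y - r).
Proof.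
move=> y_gt0; rewrite sym_cat // size_takel; last lia.
by case: ifP => // y_le; rewrite sym_take // y_gt0.
Qed.

Lemma size_beta : size beta = r + n.
Proof.
have size_g : size g = n by apply: size_apply_op => q /pos_j_range; have := j_gt0; lia.
by rewrite size_cat size_g size_takel //; lia.
Qed.

Section BetaOccurrence.

Variable k : nat.
Hypothesis k_le : k <= r.
Hypothesis occurs : forall y, 0 < y <= n -> sym beta (y + k) = sym f y.

Local Notation d := (r - k).

Lemma occurs_period y : 0 < y -> y + k <= n ->
  y \notin [seq p + d | p <- op_pos Oi] -> sym f (y + k) = sym f y.
Proof.
move=> y_gt0 y_le not_i; rewrite -[RHS]occurs ?y_gt0 //; last lia.
rewrite sym_beta; last lia.
case: leqP => // lt_r; rewrite -sym_shift_notin_i; [congr sym; lia | lia |].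
by apply: contra not_i => yd_i; apply/mapP; exists (y + k - r) => //; lia.
Qed.

Lemma occurs_period_compl q : 0 < q -> q + d <= n -> q \notin op_pos Oj ->
  sym f (q + d) = sym f q.
Proof.
move=> q_gt0 q_le q_j; rewrite -[LHS]occurs ?q_le ?addn_gt0 ?q_gt0 //.
rewrite sym_beta; last lia.
rewrite ifF; last lia.
by rewrite (_ : _ - r = q) ?sym_apply_notin //; lia.
Qed.

Lemma occurs_cover q : q \in op_pos Oi ++ op_pos Oj ->
  (q \in [seq p + d | p <- op_pos Oi]) || (q + k \in op_pos Oj).
Proof.
move=> q_ij; have q_range := pos_range q_ij.
apply: contraR (sym_shift_mismatch q_ij) => /norP[not_i not_j]; apply/negPn/eqP.
rewrite (_ : q + r = q + k + d); last lia.
by rewrite occurs_period_compl // ?occurs_period //; lia.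
Qed.

Lemma occurs_swap_i : is_swp Oi -> d != 1.
Proof.
move=> swp_i; apply/eqP => d1; have := op_valid_swp swp_i valid_i.
have := pos_i_lt (op_index_in_pos Oi); have := pos_j_range (op_index_in_pos Oj) => j_le i_lt.
have i_j : i \notin op_pos Oj by apply/negP => /pos_j_range; lia.
by rewrite -(occurs_period_compl i_gt0) // d1 ?addn1 ?eqxx //; lia.
Qed.

Lemma occurs_swap_j : is_swp Oj -> k = 1 -> j \in [seq p + d | p <- op_pos Oi].
Proof.
move=> swp_j k1; apply: contraTT (op_valid_swp swp_j valid_j) => not_i; apply/negPn.
have not_pos_i p : j <= p -> p \notin op_pos Oi by move=> le_jp; apply/negP=> /pos_i_lt; lia.
have := pos_j_range (op_index_in_pos Oj) => j_le.
by rewrite !(sym_apply_notin _ i_gt0) ?not_pos_i // -addn1 -k1 occurs_period //; lia.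
Qed.

Lemma occurs_shift_op : Oj = shift_op k Oi /\ r = k.*2.
Proof.
have [|shift_ij d_eq] := shift_op_of_cover _ pos_lt occurs_cover occurs_swap_i occurs_swap_j.
  by rewrite subnKC.
by split=> //; lia.
Qed.

Lemma occurs_factor t : t < k -> sym f (i + t) = sym f (i + k + t).
Proof.
have [shift_ij r2] := occurs_shift_op; have j_eq := congr1 op_index shift_ij.
rewrite op_index_shift in j_eq; have := pos_j_range (op_index_in_pos Oj).
move=> j_le t_lt; rewrite addnAC occurs_period //; [lia|lia|].
by apply/mapP => -[p /op_index_le_pos]; lia.
Qed.

End BetaOccurrence.

Section HalfShift.

Variable h : nat.
Hypothesis r_half : r = h.*2.
Hypothesis shift_ij : Oj = shift_op h Oi.
Hypothesis factor_ij : forall t, t < h -> sym f (i + t) = sym f (i + h + t).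

Let j_eq : j = i + h.
Proof. by rewrite shift_ij op_index_shift. Qed.

Let j_le : j <= n - r.
Proof. by have := pos_j_range (op_index_in_pos Oj); lia. Qed.

Lemma half_period q : 0 < q < j -> sym f (q + h) = sym f q.
Proof.
have [m] := ubnP (j - q); elim: m q => // m IH q lt_m /andP[q_gt0 q_lt].
case: (leqP i q) => [le_iq | lt_qi].
  have [t -> t_lt] : exists2 t, q = i + t & t < h by exists (q - i); lia.
  by rewrite factor_ij // addnAC.
have q_i : q \notin op_pos Oi by apply/negP => /op_index_le_pos; lia.
have q_j : q \notin op_pos Oj by apply/negP => /op_index_le_pos; lia.
rewrite -[RHS](sym_apply_notin _ j_gt0 q_gt0 q_j) -sym_shift_notin_i //; last lia.
by rewrite r_half -addnn addnA (IH (q + h)) //; lia.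
Qed.

Lemma half_shift q : 0 < q -> q + h <= n -> sym f (q + h) = sym g q.
Proof.
have [m] := ubnP q; elim: m q => // m IH q lt_m q_gt0 q_le.
case: (ltnP q j) => [q_lt | le_jq].
  rewrite sym_apply_notin ?half_period ?q_gt0 //.
  by apply/negP => /op_index_le_pos; lia.
have -> : q = q - h + h by lia.
case: (boolP (q - h \in op_pos Oi)) => [qh_i | qh_ni].
  rewrite -addnA addnn -r_half sym_shift_in_i // shift_ij sym_apply_shift_op //.
  by move=> p /pos_i_lt p_range; rewrite half_period //; lia.
have qh_j : q - h + h \notin op_pos Oj by rewrite shift_ij mem_op_pos_shift.
rewrite -addnA addnn -r_half sym_shift_notin_i //; last lia.
by rewrite -IH ?(sym_apply_notin _ j_gt0) //; lia.
Qed.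

Lemma half_occurs y : 0 < y <= n -> sym beta (y + h) = sym f y.
Proof.
move=> /andP[y_gt0 y_le]; rewrite sym_beta; last lia.
case: leqP => [le_r | lt_r]; first by rewrite half_period //; lia.
have -> : y + h - r = y - h by lia.
by rewrite -half_shift; [congr sym | |]; lia.
Qed.

End HalfShift.

End TwoErrorOverlap.

Lemma overlap_of_run f l r Oi Oj :
  run (take l f) [:: Oi; Oj] = Some (drop r f) ->
  [/\ op_valid Oi f, op_valid Oj (apply_op Oi f), {in op_pos Oj, forall q, q <= l}
     & take l (apply_op Oj (apply_op Oi f)) = drop r f].
Proof.
rewrite /=; case: ifP => // valid_i; rewrite apply_op_take //.
case: ifP => // valid_j [<-]; rewrite apply_op_take //.
split; [exact: op_valid_take valid_i | exact: op_valid_take valid_j | | by []].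
by move=> q /(op_valid_pos valid_j); rewrite size_take_min; lia.
Qed.

Lemma condition_tilde_shift f r Oi Oj : 0 < op_index Oi < op_index Oj ->
  op_index Oj + r./2 <= size f ->
  condition_tilde f r Oi Oj <->
  [/\ r = (r./2).*2, Oj = shift_op r./2 Oi &
      forall t, t < r./2 -> sym f (op_index Oi + t) = sym f (op_index Oi + r./2 + t)].
Proof.
move=> /andP[i_gt0 lt_ij] j_le.
have even_r : ~~ odd r <-> r = (r./2).*2.
  by split=> [even | ->]; [rewrite -{1}(odd_double_half r) (negbTE even) | rewrite odd_double].
have factorE : op_index Oj = op_index Oi + r./2 ->
    factor f (op_index Oi) (op_index Oi + r./2 - 1) =
    factor f (op_index Oj) (op_index Oj + r./2 - 1) <->
    forall t, t < r./2 -> sym f (op_index Oi + t) = sym f (op_index Oi + r./2 + t).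
  by move=> j_eq; rewrite factor_eqP ?j_eq //; lia.
split.
  case=> kind /even_r r2 ji fac; have j_eq : op_index Oj = op_index Oi + r./2 by lia.
  by split=> //; [apply/shift_opP | apply/factorE].
case=> /even_r even /shift_opP[kind j_eq] /(factorE j_eq) fac.
by split=> //; lia.
Qed.

Theorem lemma4 (f : seq bool) (r : nat) (Oi Oj : op) :
  let n := size f in
  let l := n - r in
  1 <= l <= n - 1 ->
  tilde_dist (pre l f) (suf l f) 2 ->
  minimal_tt (pre l f) (suf l f) [:: Oi; Oj] ->
  op_index Oi < op_index Oj ->
  (~~ free f (pre r f ++ apply_op Oj f) <-> condition_tilde f r Oi Oj).
Proof.
move=> n l /andP[l_gt0 l_lt] _ [run_os _ uniq_os] lt_ij.
have r_gt0 : 0 < r by lia.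
rewrite /suf (_ : size f - l = r) in run_os; last lia.
have [valid_i valid_j pos_j_le overlap] := overlap_of_run run_os.
rewrite /= cats0 in uniq_os; have pos_lt := op_pos_lt uniq_os lt_ij.
have j_le := pos_j_le _ (op_index_in_pos Oj).
have i_gt0 := op_valid_index_gt0 valid_i.
rewrite /free negbK infix_symP (size_beta r_gt0 valid_i valid_j pos_j_le).
rewrite condition_tilde_shift; [|lia|lia].
split=> [[k k_le occurs] | [r2 shift_ij factor_ij]].
  have {}k_le : k <= r by lia.
  have [shift_ij r2] := occurs_shift_op r_gt0 valid_i valid_j pos_j_le pos_lt overlap k_le occurs.
  rewrite r2 doubleK -r2; split=> // t.
  exact: (occurs_factor r_gt0 valid_i valid_j pos_j_le pos_lt overlap k_le occurs).
exists r./2 => [|y]; first lia.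
exact: (half_occurs r_gt0 valid_i valid_j pos_j_le pos_lt overlap r2 shift_ij factor_ij).
Qed.
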